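(* Let $f>0$ be an even $C^2$ function on $\mathbb{R}$ with $f'(v)\geq0$ for $v\geq0$ and $f'(v)^2\leq C_0 f''(v)f(v)$ for all $v$. Let $t\geq0$, $R>0$, and let $\phi$ be smooth on a neighbourhood of $\{t\}\times\{|x|\leq R\}$. Then, with a constant depending only on $C_0$, \[ \int_{|x|\leq R}f''(t-r)\phi^2\,dx\lesssim\int_{|x|\leq R}\Big[f(t+r)\big(L(r\phi)\big)^2+f(t-r)\big(\underline L(r\phi)\big)^2\Big]\frac{dx}{r^2}+|f'(t-R)|\int_{|x|=R}\phi^2\,R^2\,dS(\omega). \]
   Context: $r=|x|$, $\omega=x/r$, $\partial_r=\omega^i\partial_i$, $L=\partial_t+\partial_r$, $\underline L=\partial_t-\partial_r$; $dS(\omega)$ is the standard measure on the unit sphere. *)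

From Stdlib Require Import Reals Lra List ClassicalEpsilon.
Open Scope R_scope.

(* Functions of (t, x1, x2, x3). *)
Definition fun4 := R -> R -> R -> R -> R.

Definition coord (i : nat) (t x y z : R) : R :=
  match i with 0%nat => t | 1%nat => x | 2%nat => y | _ => z end.

Definition along (g : fun4) (i : nat) (t x y z : R) : R -> R :=
  match i with
  | 0%nat => fun s => g s x y z
  | 1%nat => fun s => g t s y z
  | 2%nat => fun s => g t x s z
  | _ => fun s => g t x y s
  end.

Definition open4 (U : R -> R -> R -> R -> Prop) : Prop :=
  forall t x y z, U t x y z -> exists d, 0 < d /\
    forall t' x' y' z', Rabs (t' - t) < d -> Rabs (x' - x) < d ->
      Rabs (y' - y) < d -> Rabs (z' - z) < d -> U t' x' y' z'.

Definition cont4_on (U : R -> R -> R -> R -> Prop) (g : fun4) : Prop :=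
  forall t x y z, U t x y z -> forall eps, 0 < eps -> exists d, 0 < d /\
    forall t' x' y' z', Rabs (t' - t) < d -> Rabs (x' - x) < d ->
      Rabs (y' - y) < d -> Rabs (z' - z) < d ->
      Rabs (g t' x' y' z' - g t x y z) < eps.

(* C^infinity on the open set U: all iterated partial derivatives
   D (i_k :: ... :: i_1 :: nil) = d_{i_k} ... d_{i_1} g exist and are
   continuous on U. *)
Definition smooth_on (U : R -> R -> R -> R -> Prop) (g : fun4) : Prop :=
  exists D : list nat -> fun4,
    (forall t x y z, U t x y z -> D nil t x y z = g t x y z) /\
    (forall l i t x y z, (i < 4)%nat -> U t x y z ->
       derivable_pt_lim (along (D l) i t x y z) (coord i t x y z)
                        (D (i :: l) t x y z)) /\
    (forall l, cont4_on U (D l)).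

(* Riemann integral on [a,b] (its value when h is Riemann integrable). *)
Definition Rint (h : R -> R) (a b : R) : R :=
  epsilon (inhabits 0)
    (fun v => exists pr : Riemann_integrable h a b, RiemannInt pr = v).

(* Integral over the unit sphere S^2 w.r.t. the standard measure dS(omega),
   in spherical coordinates omega = (sin th cos ph, sin th sin ph, cos th),
   dS = sin th dth dph. *)
Definition sph_int (F : R -> R -> R -> R) : R :=
  Rint (fun ph =>
    Rint (fun th => F (sin th * cos ph) (sin th * sin ph) (cos th) * sin th)
         0 PI) 0 (2 * PI).

(* Integral over the ball {|x| <= Rr} in R^3, in polar coordinates
   x = r omega, dx = r^2 dr dS(omega); G r w1 w2 w3 is the integrand
   evaluated at x = r omega. *)
Definition ball_int (Rr : R) (G : R -> R -> R -> R -> R) : R :=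
  sph_int (fun w1 w2 w3 => Rint (fun r => G r w1 w2 w3 * r ^ 2) 0 Rr).

(* At the point (t, r omega):  L(r phi) = (d_t + d_r)(r phi)
   = phi + r (d_t phi + omega^i d_i phi), since d_r r = 1;
   Lbar(r phi) = (d_t - d_r)(r phi) = - phi + r (d_t phi - omega^i d_i phi).
   dphi i is the i-th partial derivative of phi (0 = time). *)
Definition Lrphi (phi : fun4) (dphi : nat -> fun4) (t r w1 w2 w3 : R) : R :=
  let x := r * w1 in let y := r * w2 in let z := r * w3 in
  phi t x y z + r * (dphi 0%nat t x y z +
    (w1 * dphi 1%nat t x y z + w2 * dphi 2%nat t x y z + w3 * dphi 3%nat t x y z)).

Definition Lbrphi (phi : fun4) (dphi : nat -> fun4) (t r w1 w2 w3 : R) : R :=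
  let x := r * w1 in let y := r * w2 in let z := r * w3 in
  - phi t x y z + r * (dphi 0%nat t x y z -
    (w1 * dphi 1%nat t x y z + w2 * dphi 2%nat t x y z + w3 * dphi 3%nat t x y z)).

(* Along each ray, u(r) = r phi(t, r omega) vanishes at r = 0 and its radial
   derivative is u' = (L(r phi) - Lbar(r phi)) / 2.  Integrating
   (- f'(t - r) u^2)' over [0, R] gives
     int f''(t - r) u^2 = int 2 f'(t - r) u u' - f'(t - R) u(R)^2,
   and the cross term is at most (1/2) f''(t - r) u^2 + 2 C0 f(t - r) u'^2 since
   f'^2 <= C0 f'' f, while 2 f(t - r) u'^2 <= f(t + r) (L(r phi))^2 +
   f(t - r) (Lbar(r phi))^2 because f is even and nondecreasing on [0, oo), so
   f(t - r) <= f(t + r).  This is the estimate with C = 2 C0 + 2 on every ray;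
   integrating over the sphere (dx = r^2 dr dS(omega)) gives the theorem. *)

From Stdlib Require Import Reals Lra Lia Classical ClassicalEpsilon.
From Coquelicot Require Import Coquelicot.
Open Scope R_scope.

(* Coquelicot states these for [plus] and [mult]; [apply] needs the [Rplus]/[Rmult] form. *)
Lemma continuous_Rplus {T : UniformSpace} (f g : T -> R) x :
  continuous f x -> continuous g x -> continuous (fun y => f y + g y) x.
Proof. exact (continuous_plus f g x). Qed.

Lemma continuous_Rmult {T : UniformSpace} (f g : T -> R) x :
  continuous f x -> continuous g x -> continuous (fun y => f y * g y) x.
Proof. exact (continuous_mult f g x). Qed.

Lemma continuous_Ropp {T : UniformSpace} (f : T -> R) x :
  continuous f x -> continuous (fun y => - f y) x.
Proof. exact (continuous_opp f x). Qed.

Lemma continuous_Rminus {T : UniformSpace} (f g : T -> R) x :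
  continuous f x -> continuous g x -> continuous (fun y => f y - g y) x.
Proof. intros Hf Hg. exact (continuous_Rplus _ _ x Hf (continuous_Ropp _ x Hg)). Qed.

Lemma continuous_Rdiv_const {T : UniformSpace} (f : T -> R) c x :
  continuous f x -> continuous (fun y => f y / c) x.
Proof. intros Hf. exact (continuous_Rmult _ _ x Hf (continuous_const _ x)). Qed.

Lemma continuous_pow {T : UniformSpace} (f : T -> R) n x :
  continuous f x -> continuous (fun y => f y ^ n) x.
Proof.
intros Hf; induction n as [|n IH]; [apply continuous_const|].
exact (continuous_Rmult _ _ x Hf IH).
Qed.

Lemma continuous_sin x : continuous sin x.
Proof. apply continuity_pt_filterlim, continuity_sin. Qed.

Lemma continuous_cos x : continuous cos x.
Proof. apply continuity_pt_filterlim, continuity_cos. Qed.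

Ltac auto_continuous :=
  repeat match goal with
  | |- continuous (fun _ => _ + _) _ => apply continuous_Rplus
  | |- continuous (fun _ => _ - _) _ => apply continuous_Rminus
  | |- continuous (fun _ => _ * _) _ => apply continuous_Rmult
  | |- continuous (fun _ => - _) _ => apply continuous_Ropp
  | |- continuous (fun _ => _ ^ _) _ => apply continuous_pow
  | |- continuous (fun y => @?a y / ?c) _ => apply (continuous_Rdiv_const a c)
  | |- continuous (fun y => y) _ => apply continuous_id
  | |- continuous (fun _ => ?c) _ => apply continuous_const
  | |- continuous fst _ => apply continuous_fst
  | |- continuous snd _ => apply continuous_snd
  | |- continuous (fun y => fst (@?a y)) _ => apply (continuous_comp a fst); [|apply continuous_fst]
  | |- continuous (fun y => snd (@?a y)) _ => apply (continuous_comp a snd); [|apply continuous_snd]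
  | |- continuous (fun y => sin (@?a y)) _ => apply (continuous_comp a sin); [|apply continuous_sin]
  | |- continuous (fun y => cos (@?a y)) _ => apply (continuous_comp a cos); [|apply continuous_cos]
  | H : forall v, continuous ?k v |- continuous (fun y => ?k (@?a y)) _ =>
      apply (continuous_comp a k); [|apply H]
  | |- continuous _ _ => assumption
  end.

Lemma ex_RInt_continuous_on (h : R -> R) a b :
  a <= b -> (forall x, a <= x <= b -> continuous h x) -> ex_RInt h a b.
Proof.
intros Hab Hh. apply (ex_RInt_continuous (V := R_CompleteNormedModule)). intros x.
rewrite Rmin_left, Rmax_right by exact Hab. apply Hh.
Qed.

Lemma Rint_RInt (h : R -> R) a b : ex_RInt h a b -> Rint h a b = RInt h a b.
Proof.
intros Hh. unfold Rint.
assert (Hv : exists v, exists pr : Riemann_integrable h a b, RiemannInt pr = v)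
  by (exists (RiemannInt (ex_RInt_Reals_0 _ _ _ Hh)); eauto).
destruct (epsilon_spec (inhabits 0) _ Hv) as [pr <-].
symmetry. apply RInt_Reals.
Qed.

Lemma Rint_ext_open (h k : R -> R) a b : a <= b ->
  (forall x, a < x < b -> k x = h x) -> ex_RInt h a b -> Rint k a b = RInt h a b.
Proof.
intros Hab Hkh Hh.
assert (Heq : forall x, Rmin a b < x < Rmax a b -> h x = k x)
  by (rewrite Rmin_left, Rmax_right by exact Hab; intros x Hx; symmetry; auto).
rewrite Rint_RInt by exact (ex_RInt_ext _ _ _ _ Heq Hh).
symmetry. exact (RInt_ext _ _ _ _ Heq).
Qed.

Section ParametricIntegral.
Context {T : UniformSpace} (h : R -> T -> R) (a b : R).
Hypothesis Hab : a <= b.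
Hypothesis Hh : forall x q, a <= x <= b ->
  continuous (fun z : R * T => h (fst z) (snd z)) (x, q).

Lemma ex_RInt_param q : ex_RInt (fun x => h x q) a b.
Proof.
apply ex_RInt_continuous_on; [exact Hab|]. intros x Hx.
apply (continuous_comp_2 (fun x => x) (fun _ => q) h);
  [apply continuous_id | apply continuous_const | exact (Hh x q Hx)].
Qed.

(* A Lebesgue number for the cover of [[a, b]] by the radii of continuity of [h]
   at the points [(s, p)] is a radius that works uniformly in [x]. *)
Lemma param_uniform_continuity p (eps : posreal) :
  exists d : posreal, forall x q, a <= x <= b -> ball p d q ->
    Rabs (h x q - h x p) < eps.
Proof.
set (e2 := pos_div_2 eps).
assert (Hloc : forall s, exists d : posreal, a <= s <= b ->
  forall z, ball (s, p) d z -> Rabs (h (fst z) (snd z) - h s p) < e2).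
{ intros s. destruct (classic (a <= s <= b)) as [Hs|Hs].
  - destruct (proj1 (filterlim_locally _ _) (Hh s p Hs) e2) as [d Hd].
    exists d. intros _ z Hz. exact (Hd z Hz).
  - exists (mkposreal 1 Rlt_0_1). intros Hs'. contradiction. }
set (delta s := proj1_sig (constructive_indefinite_description _ (Hloc s))).
assert (Hdelta : forall s, a <= s <= b -> forall z, ball (s, p) (delta s) z ->
  Rabs (h (fst z) (snd z) - h s p) < e2)
  by (intros s; exact (proj2_sig (constructive_indefinite_description _ (Hloc s)))).
destruct (compactness_value_1d a b delta) as [d Hd].
exists d. intros x q Hx Hq.
apply NNPP. intros Hfalse. apply (Hd x Hx). intros [s [Hs [Hxs Hds]]]. apply Hfalse.
assert (Hsx : ball s (delta s) x) by exact Hxs.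
assert (Hq' : Rabs (h x q - h s p) < e2)
  by (apply (Hdelta s Hs (x, q)); split; [exact Hsx | exact (ball_le _ _ _ Hds _ Hq)]).
assert (Hp' : Rabs (h x p - h s p) < e2)
  by (apply (Hdelta s Hs (x, p)); split; [exact Hsx | apply ball_center]).
replace (h x q - h x p) with ((h x q - h s p) - (h x p - h s p)) by ring.
eapply Rle_lt_trans; [apply Rabs_triang|]. rewrite Rabs_Ropp.
simpl in Hq', Hp'. lra.
Qed.

Lemma continuous_RInt_param p : continuous (fun q => RInt (fun x => h x q) a b) p.
Proof.
apply filterlim_locally. intros eps.
assert (Hk : 0 < eps / (b - a + 1)) by (apply Rdiv_lt_0_compat; [apply cond_pos | lra]).
destruct (param_uniform_continuity p (mkposreal _ Hk)) as [d Hd].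
exists d. intros q Hq. change (Rabs (RInt (fun x => h x q) a b - RInt (fun x => h x p) a b) < eps).
rewrite <- (RInt_minus (V := R_CompleteNormedModule)) by apply ex_RInt_param.
eapply Rle_lt_trans.
- apply (abs_RInt_le_const (fun x => h x q - h x p) a b (eps / (b - a + 1))); [exact Hab| |].
  + apply (ex_RInt_minus (V := R_NormedModule)); apply ex_RInt_param.
  + intros x Hx. left. exact (Hd x q Hx Hq).
- apply Rlt_le_trans with ((b - a + 1) * (eps / (b - a + 1))).
  + apply Rmult_lt_compat_r; [exact Hk | lra].
  + right. field. lra.
Qed.

End ParametricIntegral.

Lemma RInt_lin (g k : R -> R) a b (c1 c2 : R) : ex_RInt g a b -> ex_RInt k a b ->
  RInt (fun s => c1 * g s + c2 * k s) a b = c1 * RInt g a b + c2 * RInt k a b.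
Proof.
intros Hg Hk.
rewrite (RInt_plus (V := R_CompleteNormedModule) (fun s => scal c1 (g s)) (fun s => scal c2 (k s)))
  by (apply (ex_RInt_scal (V := R_CompleteNormedModule)); assumption).
rewrite !(RInt_scal (V := R_CompleteNormedModule)) by assumption.
reflexivity.
Qed.

Definition polar (F : R -> R -> R -> R) (z : R * R) : R :=
  F (sin (fst z) * cos (snd z)) (sin (fst z) * sin (snd z)) (cos (fst z)).

Definition sph_continuous (F : R -> R -> R -> R) : Prop :=
  forall z, continuous (polar F) z.

Lemma sphere_point_unit th ph :
  (sin th * cos ph) ^ 2 + (sin th * sin ph) ^ 2 + cos th ^ 2 = 1.
Proof.
rewrite <- (sin2_cos2 th), <- (Rmult_1_r (Rsqr (sin th))), <- (sin2_cos2 ph).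
unfold Rsqr. ring.
Qed.

Section SphereIntegral.
Variable F : R -> R -> R -> R.
Hypothesis HF : sph_continuous F.

Let continuous_integrand th ph :
  continuous (fun z : R * R => polar F (fst z, snd z) * sin (fst z)) (th, ph).
Proof.
apply continuous_Rmult; [|auto_continuous].
apply (continuous_ext (polar F)); [intros [x y]; reflexivity | apply HF].
Qed.

Lemma ex_RInt_sph_inner ph : ex_RInt (fun th => polar F (th, ph) * sin th) 0 PI.
Proof.
exact (ex_RInt_param (fun th ph => polar F (th, ph) * sin th) 0 PI (Rlt_le _ _ PI_RGT_0)
  (fun th ph _ => continuous_integrand th ph) ph).
Qed.

Lemma continuous_sph_inner ph :
  continuous (fun ph => RInt (fun th => polar F (th, ph) * sin th) 0 PI) ph.
Proof.
exact (continuous_RInt_param (fun th ph => polar F (th, ph) * sin th) 0 PI (Rlt_le _ _ PI_RGT_0)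
  (fun th ph _ => continuous_integrand th ph) ph).
Qed.

Lemma ex_RInt_sph_outer :
  ex_RInt (fun ph => RInt (fun th => polar F (th, ph) * sin th) 0 PI) 0 (2 * PI).
Proof.
apply ex_RInt_continuous_on; [assert (0 < PI) by apply PI_RGT_0; lra|].
intros ph _. apply continuous_sph_inner.
Qed.

Lemma sph_int_RInt :
  sph_int F = RInt (fun ph => RInt (fun th => polar F (th, ph) * sin th) 0 PI) 0 (2 * PI).
Proof.
unfold sph_int. rewrite Rint_RInt.
- apply RInt_ext. intros ph _. apply Rint_RInt, ex_RInt_sph_inner.
- eapply ex_RInt_ext; [|exact ex_RInt_sph_outer].
  intros ph _. symmetry. apply Rint_RInt, ex_RInt_sph_inner.
Qed.

End SphereIntegral.

Lemma sph_int_le F G : sph_continuous F -> sph_continuous G ->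
  (forall z, polar F z <= polar G z) -> sph_int F <= sph_int G.
Proof.
intros HF HG Hle. rewrite (sph_int_RInt F HF), (sph_int_RInt G HG).
assert (HPI : 0 < PI) by apply PI_RGT_0.
apply RInt_le; [lra | apply ex_RInt_sph_outer; exact HF | apply ex_RInt_sph_outer; exact HG|].
intros ph _.
apply RInt_le; [lra | apply ex_RInt_sph_inner; exact HF | apply ex_RInt_sph_inner; exact HG|].
intros th Hth. apply Rmult_le_compat_r; [apply sin_ge_0; lra | apply Hle].
Qed.

Lemma sph_int_lin F G c1 c2 : sph_continuous F -> sph_continuous G ->
  sph_int (fun w1 w2 w3 => c1 * F w1 w2 w3 + c2 * G w1 w2 w3) = c1 * sph_int F + c2 * sph_int G.
Proof.
intros HF HG.
assert (HFG : sph_continuous (fun w1 w2 w3 => c1 * F w1 w2 w3 + c2 * G w1 w2 w3)).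
{ intros z. unfold polar. auto_continuous; [apply HF | apply HG]. }
rewrite (sph_int_RInt _ HFG), (sph_int_RInt F HF), (sph_int_RInt G HG).
rewrite <- RInt_lin by (apply ex_RInt_sph_outer; assumption).
apply RInt_ext. intros ph _. unfold polar; simpl.
rewrite <- RInt_lin by (apply ex_RInt_sph_inner; assumption).
apply RInt_ext. intros th _. rewrite Rmult_plus_distr_r, !Rmult_assoc. reflexivity.
Qed.

Lemma sph_continuous_Rint (H K : R -> R -> R -> R -> R) a b : a <= b ->
  (forall r w1 w2 w3, a < r < b -> K r w1 w2 w3 = H r w1 w2 w3) ->
  (forall r z, a <= r <= b ->
     continuous (fun p : R * (R * R) => polar (H (fst p)) (snd p)) (r, z)) ->
  sph_continuous (fun w1 w2 w3 => Rint (fun r => K r w1 w2 w3) a b).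
Proof.
intros Hab HKH HH z.
apply (continuous_ext (fun z => RInt (fun r => polar (H r) z) a b)).
- intros q. unfold polar at 2. symmetry.
  apply Rint_ext_open; [exact Hab | intros; apply HKH; auto |].
  exact (ex_RInt_param (fun r q => polar (H r) q) a b Hab HH q).
- exact (continuous_RInt_param (fun r q => polar (H r) q) a b Hab HH z).
Qed.

Lemma continuous_cont4_on {T : UniformSpace} U (g : fun4) (A B C D : T -> R) q :
  cont4_on U g -> U (A q) (B q) (C q) (D q) ->
  continuous A q -> continuous B q -> continuous C q -> continuous D q ->
  continuous (fun y => g (A y) (B y) (C y) (D y)) q.
Proof.
intros Hg Hq HA HB HC HD. apply filterlim_locally. intros eps.
destruct (Hg _ _ _ _ Hq eps (cond_pos eps)) as [d [Hd Hgd]].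
set (dp := mkposreal d Hd).
generalize (filter_and _ _ (proj1 (filterlim_locally _ _) HA dp)
  (filter_and _ _ (proj1 (filterlim_locally _ _) HB dp)
  (filter_and _ _ (proj1 (filterlim_locally _ _) HC dp)
                  (proj1 (filterlim_locally _ _) HD dp)))).
apply filter_imp. intros y [H1 [H2 [H3 H4]]]. exact (Hgd _ _ _ _ H1 H2 H3 H4).
Qed.

Lemma cont4_on_ext U (g k : fun4) : open4 U ->
  (forall t x y z, U t x y z -> g t x y z = k t x y z) -> cont4_on U g -> cont4_on U k.
Proof.
intros HU Hgk Hg t x y z Hp eps Heps.
destruct (HU t x y z Hp) as [d0 [Hd0 HUd]].
destruct (Hg t x y z Hp eps Heps) as [d1 [Hd1 Hgd]].
exists (Rmin d0 d1). split; [apply Rmin_glb_lt; assumption|].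
intros t' x' y' z' H1 H2 H3 H4.
assert (Hmin : forall e, e < Rmin d0 d1 -> e < d0 /\ e < d1)
  by (intros e He; split; eapply Rlt_le_trans; eauto using Rmin_l, Rmin_r).
destruct (Hmin _ H1), (Hmin _ H2), (Hmin _ H3), (Hmin _ H4).
rewrite <- (Hgk t' x' y' z'), <- (Hgk t x y z) by auto. auto.
Qed.

Lemma smooth_on_cont4_on U g : open4 U -> smooth_on U g -> cont4_on U g.
Proof.
intros HU [D [HD0 [_ HDc]]].
apply (cont4_on_ext U (D nil)); [exact HU | exact HD0 | apply HDc].
Qed.

(* On [U], [dg i] agrees with the first-order derivative [D [i]] of the witness
   of [smooth_on], by uniqueness of derivatives. *)
Lemma smooth_on_partial_cont4_on U (g : fun4) (dg : nat -> fun4) i :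
  open4 U -> smooth_on U g ->
  (forall i s x y z, (i < 4)%nat -> U s x y z ->
     derivable_pt_lim (along g i s x y z) (coord i s x y z) (dg i s x y z)) ->
  (i < 4)%nat -> cont4_on U (dg i).
Proof.
intros HU [D [HD0 [HDd HDc]]] Hdg Hi.
apply (cont4_on_ext U (D (i :: nil)%list)); [exact HU| |apply HDc].
intros t x y z Hp.
apply (uniqueness_limite (along g i t x y z) (coord i t x y z)); [|apply Hdg; auto].
apply is_derive_Reals.
apply (is_derive_ext_loc (along (D nil) i t x y z)); [|apply is_derive_Reals, HDd; auto].
destruct (HU t x y z Hp) as [d [Hd HUd]].
exists (mkposreal d Hd). intros s Hs. change (Rabs (s - coord i t x y z) < d) in Hs.
assert (H0 : forall a, Rabs (a - a) < d) by (intros a; rewrite Rminus_diag, Rabs_R0; exact Hd).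
destruct i as [|[|[|[|i]]]]; simpl in *; try lia; apply HD0, HUd; auto.
Qed.

Lemma MVT_abs (k k' : R -> R) a b :
  (forall c, Rabs (c - a) <= Rabs (b - a) -> derivable_pt_lim k c (k' c)) ->
  exists c, Rabs (c - a) <= Rabs (b - a) /\ k b - k a = k' c * (b - a).
Proof.
intros Hk. destruct (Rtotal_order a b) as [Hab|[<-|Hab]].
- destruct (MVT_cor2 k k' a b Hab) as [c [Hc1 Hc2]].
  { intros c Hc. apply Hk. rewrite !Rabs_right by lra. lra. }
  exists c. split; [rewrite !Rabs_right by lra; lra | exact Hc1].
- exists a. split; [lra | ring].
- destruct (MVT_cor2 k k' b a Hab) as [c [Hc1 Hc2]].
  { intros c Hc. apply Hk. rewrite !Rabs_left1 by lra. lra. }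
  exists c. split; [rewrite !Rabs_left1 by lra; lra | lra].
Qed.

Lemma Rabs_mult_le_l h w : Rabs w <= 1 -> Rabs (h * w) <= Rabs h.
Proof.
intros Hw. rewrite Rabs_mult. rewrite <- (Rmult_1_r (Rabs h)) at 2.
apply Rmult_le_compat_l; [apply Rabs_pos | exact Hw].
Qed.

Lemma cont4_on_partials_near U (dg : nat -> fun4) t x y z eps :
  open4 U -> (forall i, (i < 4)%nat -> cont4_on U (dg i)) -> U t x y z -> 0 < eps ->
  exists del, 0 < del /\ forall a b c,
    Rabs (a - x) < del -> Rabs (b - y) < del -> Rabs (c - z) < del ->
    U t a b c /\ forall i, (i < 4)%nat -> Rabs (dg i t a b c - dg i t x y z) < eps.
Proof.
intros HU Hcont Hp Heps.
assert (Ht0 : forall d, 0 < d -> Rabs (t - t) < d)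
  by (intros d Hd; rewrite Rminus_diag, Rabs_R0; exact Hd).
enough (Hn : forall n, (n <= 4)%nat -> exists del, 0 < del /\ forall a b c,
    Rabs (a - x) < del -> Rabs (b - y) < del -> Rabs (c - z) < del ->
    U t a b c /\ forall i, (i < n)%nat -> Rabs (dg i t a b c - dg i t x y z) < eps)
  by exact (Hn 4%nat (le_n 4)).
induction n as [|n IH]; intros Hn.
- destruct (HU t x y z Hp) as [d [Hd HUd]].
  exists d. split; [exact Hd|]. intros a b c Ha Hb Hc. split; [auto | intros; lia].
- destruct (IH ltac:(lia)) as [d [Hd Hnear]].
  destruct (Hcont n ltac:(lia) t x y z Hp eps Heps) as [d' [Hd' Hcn]].
  exists (Rmin d d'). split; [apply Rmin_glb_lt; assumption|].
  assert (Hmin : forall e, e < Rmin d d' -> e < d /\ e < d')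
    by (intros e He; split; eapply Rlt_le_trans; eauto using Rmin_l, Rmin_r).
  intros a b c Ha Hb Hc.
  destruct (Hmin _ Ha), (Hmin _ Hb), (Hmin _ Hc).
  destruct (Hnear a b c) as [HUabc Hi]; auto.
  split; [exact HUabc|]. intros i Hin.
  destruct (Nat.eq_dec i n) as [->|Hne]; [apply Hcn; auto | apply Hi; lia].
Qed.

(* The increment of [g] along the ray is split into three one-coordinate
   increments, each evaluated by the mean value theorem. *)
Lemma derivable_pt_lim_radial U (g : fun4) (dg : nat -> fun4) t r w1 w2 w3 :
  open4 U ->
  (forall i s x y z, (i < 4)%nat -> U s x y z ->
     derivable_pt_lim (along g i s x y z) (coord i s x y z) (dg i s x y z)) ->
  (forall i, (i < 4)%nat -> cont4_on U (dg i)) ->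
  U t (r * w1) (r * w2) (r * w3) -> Rabs w1 <= 1 -> Rabs w2 <= 1 -> Rabs w3 <= 1 ->
  derivable_pt_lim (fun s => g t (s * w1) (s * w2) (s * w3)) r
    (w1 * dg 1%nat t (r * w1) (r * w2) (r * w3) + w2 * dg 2%nat t (r * w1) (r * w2) (r * w3)
     + w3 * dg 3%nat t (r * w1) (r * w2) (r * w3)).
Proof.
intros HU Hdg Hcont Hp Hw1 Hw2 Hw3 eps Heps.
set (x := r * w1) in *. set (y := r * w2) in *. set (z := r * w3) in *.
destruct (cont4_on_partials_near U dg t x y z (eps / 3) HU Hcont Hp ltac:(lra))
  as [del [Hdel Hnear]].
exists (mkposreal del Hdel). intros h Hh0 Hh. simpl in Hh.
assert (Hsmall : forall a w, Rabs w <= 1 -> Rabs (a + h * w - a) < del).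
{ intros a w Hw. replace (a + h * w - a) with (h * w) by ring.
  eapply Rle_lt_trans; [apply Rabs_mult_le_l|]; eassumption. }
assert (Hzero : forall a, Rabs (a - a) < del)
  by (intros a; rewrite Rminus_diag, Rabs_R0; exact Hdel).
set (X := x + h * w1). set (Y := y + h * w2). set (Z := z + h * w3).
assert (HX : Rabs (X - x) < del) by exact (Hsmall x w1 Hw1).
assert (HY : Rabs (Y - y) < del) by exact (Hsmall y w2 Hw2).
assert (HZ : Rabs (Z - z) < del) by exact (Hsmall z w3 Hw3).
destruct (MVT_abs (fun s => g t x y s) (dg 3%nat t x y) z Z) as [c3 [Hc3 E3]].
{ intros c Hc. apply (Hdg 3%nat t x y c ltac:(lia)), Hnear; auto. lra. }
destruct (MVT_abs (fun s => g t x s Z) (fun s => dg 2%nat t x s Z) y Y) as [c2 [Hc2 E2]].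
{ intros c Hc. apply (Hdg 2%nat t x c Z ltac:(lia)), Hnear; auto. lra. }
destruct (MVT_abs (fun s => g t s Y Z) (fun s => dg 1%nat t s Y Z) x X) as [c1 [Hc1 E1]].
{ intros c Hc. apply (Hdg 1%nat t c Y Z ltac:(lia)), Hnear; auto. lra. }
replace ((r + h) * w1) with X by (unfold X, x; ring).
replace ((r + h) * w2) with Y by (unfold Y, y; ring).
replace ((r + h) * w3) with Z by (unfold Z, z; ring).
replace ((g t X Y Z - g t x y z) / h) with
  (w1 * dg 1%nat t c1 Y Z + w2 * dg 2%nat t x c2 Z + w3 * dg 3%nat t x y c3).
2: { replace (g t X Y Z - g t x y z) with
       ((g t X Y Z - g t x Y Z) + (g t x Y Z - g t x y Z) + (g t x y Z - g t x y z)) by ring.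
     simpl in E1, E2, E3. rewrite E1, E2, E3. unfold X, Y, Z. field. exact Hh0. }
assert (Hterm : forall i a b c w, (i < 4)%nat -> Rabs w <= 1 ->
  Rabs (a - x) < del -> Rabs (b - y) < del -> Rabs (c - z) < del ->
  Rabs ((dg i t a b c - dg i t x y z) * w) < eps / 3).
{ intros i a b c w Hi Hw Ha Hb Hc.
  eapply Rle_lt_trans; [apply Rabs_mult_le_l, Hw | apply Hnear; auto]. }
assert (T1 := Hterm 1%nat c1 Y Z w1 ltac:(lia) Hw1 ltac:(lra) HY HZ).
assert (T2 := Hterm 2%nat x c2 Z w2 ltac:(lia) Hw2 (Hzero x) ltac:(lra) HZ).
assert (T3 := Hterm 3%nat x y c3 w3 ltac:(lia) Hw3 (Hzero x) (Hzero y) ltac:(lra)).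
replace (w1 * dg 1%nat t c1 Y Z + w2 * dg 2%nat t x c2 Z + w3 * dg 3%nat t x y c3 -
   (w1 * dg 1%nat t x y z + w2 * dg 2%nat t x y z + w3 * dg 3%nat t x y z))
  with ((dg 1%nat t c1 Y Z - dg 1%nat t x y z) * w1 + (dg 2%nat t x c2 Z - dg 2%nat t x y z) * w2
        + (dg 3%nat t x y c3 - dg 3%nat t x y z) * w3) by ring.
eapply Rle_lt_trans; [apply Rabs_triang|].
eapply Rle_lt_trans; [apply Rplus_le_compat_r, Rabs_triang|]. lra.
Qed.

Lemma cross_term_le a b c C0 u v : 0 < C0 -> 0 < c -> a ^ 2 <= C0 * b * c ->
  2 * a * u * v <= / 2 * (b * u ^ 2) + 2 * C0 * c * v ^ 2.
Proof.
intros HC0 Hc Ha.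
assert (HC0c : 0 < C0 * c) by (apply Rmult_lt_0_compat; assumption).
assert (Hcv : 0 <= C0 * c * v ^ 2) by (apply Rmult_le_pos; [lra | apply pow2_ge_0]).
assert (Hb : 0 <= b).
{ destruct (Rle_or_lt 0 b) as [Hb|Hb]; [exact Hb|].
  assert (0 <= a ^ 2) by apply pow2_ge_0. nra. }
destruct (Rle_lt_or_eq_dec 0 b Hb) as [Hb'|<-].
- apply Rmult_le_reg_l with b; [exact Hb'|].
  assert (0 <= (b * u - 2 * a * v) ^ 2) by apply pow2_ge_0.
  nra.
- assert (a = 0) by nra. subst a. nra.
Qed.

Lemma half_diff_sq_le p q c c' : 0 <= c <= c' ->
  2 * c * ((p - q) / 2) ^ 2 <= c' * p ^ 2 + c * q ^ 2.
Proof.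
intros Hc.
assert (0 <= (c' - c) * p ^ 2) by (apply Rmult_le_pos; [lra | apply pow2_ge_0]).
assert (0 <= c * (p + q) ^ 2) by (apply Rmult_le_pos; [lra | apply pow2_ge_0]).
nra.
Qed.

Lemma continuous_of_derivable_pt_lim f x l : derivable_pt_lim f x l -> continuous f x.
Proof. intros H. apply continuity_pt_filterlim, derivable_continuous_pt. exists l. exact H. Qed.

Section WeightedEstimate.
Variables (f f1 f2 : R -> R) (C0 : R).
Hypothesis Hfpos : forall v, 0 < f v.
Hypothesis Heven : forall v, f (- v) = f v.
Hypothesis Hf1 : forall v, derivable_pt_lim f v (f1 v).
Hypothesis Hf2 : forall v, derivable_pt_lim f1 v (f2 v).
Hypothesis Hc2 : continuity f2.
Hypothesis Hmono : forall v, 0 <= v -> 0 <= f1 v.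
Hypothesis HC : forall v, (f1 v) ^ 2 <= C0 * f2 v * f v.
Hypothesis HC0 : 0 < C0.

Lemma weight_shift_le t r : 0 <= t -> 0 <= r -> f (t - r) <= f (t + r).
Proof.
intros Ht Hr.
assert (Hnd : forall x y, 0 <= x <= y -> f x <= f y).
{ intros x y Hxy. destruct (Rle_lt_or_eq_dec x y (proj2 Hxy)) as [Hlt|<-]; [|lra].
  destruct (MVT_cor2 f f1 x y Hlt (fun c _ => Hf1 c)) as [c [E Hc]].
  assert (0 <= f1 c * (y - x)) by (apply Rmult_le_pos; [apply Hmono|]; lra).
  lra. }
destruct (Rle_or_lt r t).
- apply Hnd. lra.
- replace (t - r) with (- (r - t)) by ring. rewrite Heven. apply Hnd. lra.
Qed.

Lemma weight_cross_le t r u a b : 0 <= t -> 0 <= r ->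
  2 * f1 (t - r) * u * ((a - b) / 2)
  <= / 2 * (f2 (t - r) * u ^ 2) + C0 * (f (t + r) * a ^ 2 + f (t - r) * b ^ 2).
Proof.
intros Ht Hr.
assert (Hshift := weight_shift_le t r Ht Hr).
assert (Hpos := Hfpos (t - r)).
eapply Rle_trans; [apply (cross_term_le (f1 (t - r)) (f2 (t - r)) (f (t - r)) C0); auto|].
assert (H := half_diff_sq_le a b (f (t - r)) (f (t + r)) ltac:(lra)).
assert (C0 * (2 * f (t - r) * ((a - b) / 2) ^ 2) <= C0 * (f (t + r) * a ^ 2 + f (t - r) * b ^ 2))
  by (apply Rmult_le_compat_l; lra).
lra.
Qed.

Lemma continuous_weights :
  (forall v, continuous f v) /\ (forall v, continuous f1 v) /\ (forall v, continuous f2 v).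
Proof.
split; [|split]; intros v.
- exact (continuous_of_derivable_pt_lim _ _ _ (Hf1 v)).
- exact (continuous_of_derivable_pt_lim _ _ _ (Hf2 v)).
- apply continuity_pt_filterlim, Hc2.
Qed.

Section Radial.
Variables (t b : R) (u Lr Lbr : R -> R).
Hypothesis Ht : 0 <= t.
Hypothesis Hb : 0 <= b.
Hypothesis Hu0 : u 0 = 0.
Hypothesis Hu : forall s, 0 <= s <= b -> derivable_pt_lim u s ((Lr s - Lbr s) / 2).
Hypothesis HLr : forall s, 0 <= s <= b -> continuous Lr s.
Hypothesis HLbr : forall s, 0 <= s <= b -> continuous Lbr s.

Let g0 s := f2 (t - s) * u s ^ 2.
Let g1 s := 2 * f1 (t - s) * u s * ((Lr s - Lbr s) / 2).
Let energy s := f (t + s) * Lr s ^ 2 + f (t - s) * Lbr s ^ 2.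

Let continuous_integrands s : 0 <= s <= b ->
  continuous g0 s /\ continuous g1 s /\ continuous energy s.
Proof.
intros Hs.
assert (Hcu := continuous_of_derivable_pt_lim _ _ _ (Hu s Hs)).
destruct continuous_weights as [Hcf [Hcf1 Hcf2]].
specialize (HLr s Hs). specialize (HLbr s Hs).
unfold g0, g1, energy. repeat split; auto_continuous.
Qed.

(* [(-f'(t - s) u(s)^2)' = f''(t - s) u(s)^2 - 2 f'(t - s) u(s) u'(s)] and [u(0) = 0]. *)
Let integration_by_parts : RInt g0 0 b - RInt g1 0 b = - f1 (t - b) * u b ^ 2.
Proof.
set (F s := - (f1 (t - s) * (u s * u s))).
assert (HF : forall s, 0 <= s <= b -> derivable_pt_lim F s (g0 s - g1 s)).
{ intros s Hs.
  assert (Hf1t : derivable_pt_lim (fun s => f1 (t - s)) s (- f2 (t - s))).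
  { replace (- f2 (t - s)) with (f2 (t - s) * (0 - 1)) by ring.
    apply (derivable_pt_lim_comp (fun s => t - s) f1); [|apply Hf2].
    apply (derivable_pt_lim_minus (fun _ => t) id);
      [apply derivable_pt_lim_const | apply derivable_pt_lim_id]. }
  assert (HuF := derivable_pt_lim_mult _ _ _ _ _ (Hu s Hs) (Hu s Hs)).
  assert (H := derivable_pt_lim_opp _ _ _ (derivable_pt_lim_mult _ _ _ _ _ Hf1t HuF)).
  replace (g0 s - g1 s) with
    (- (- f2 (t - s) * (u s * u s)
        + f1 (t - s) * ((Lr s - Lbr s) / 2 * u s + u s * ((Lr s - Lbr s) / 2))))
    by (unfold g0, g1; ring).
  exact H. }
assert (Hint : is_RInt (fun s => g0 s - g1 s) 0 b (minus (F b) (F 0))).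
{ apply (is_RInt_derive (V := R_CompleteNormedModule));
    intros s Hs; rewrite Rmin_left, Rmax_right in Hs by exact Hb.
  - apply is_derive_Reals, HF, Hs.
  - destruct (continuous_integrands s Hs) as [H0 [H1 _]]. auto_continuous. }
rewrite <- (RInt_minus (V := R_CompleteNormedModule));
  [| apply ex_RInt_continuous_on; [exact Hb | apply continuous_integrands] ..].
change (RInt (fun s => g0 s - g1 s) 0 b = - f1 (t - b) * u b ^ 2).
rewrite (is_RInt_unique _ _ _ _ Hint). unfold F, minus, plus, opp; simpl. rewrite Hu0. ring.
Qed.

Lemma weighted_radial_estimate :
  RInt (fun s => f2 (t - s) * u s ^ 2) 0 b
  <= (2 * C0 + 2) * (RInt (fun s => f (t + s) * Lr s ^ 2 + f (t - s) * Lbr s ^ 2) 0 b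
                     + Rabs (f1 (t - b)) * u b ^ 2).
Proof.
assert (Hex : forall k : R -> R, (forall s, 0 <= s <= b -> continuous k s) -> ex_RInt k 0 b)
  by (intros k Hk; apply ex_RInt_continuous_on; assumption).
assert (E0 : ex_RInt g0 0 b) by (apply Hex; apply continuous_integrands).
assert (E1 : ex_RInt g1 0 b) by (apply Hex; apply continuous_integrands).
assert (EE : ex_RInt energy 0 b) by (apply Hex; apply continuous_integrands).
assert (Hcross : RInt g1 0 b <= / 2 * RInt g0 0 b + C0 * RInt energy 0 b).
{ rewrite <- RInt_lin by assumption. apply RInt_le; [exact Hb | exact E1 | |].
  - apply Hex. intros s Hs. destruct (continuous_integrands s Hs) as [H0 [_ HE]].
    auto_continuous.
  - intros s Hs. apply weight_cross_le; lra. }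
assert (Henergy : 0 <= RInt energy 0 b).
{ apply RInt_ge_0; [exact Hb | exact EE|]. intros s _. unfold energy.
  assert (Hp := Hfpos (t + s)). assert (Hm := Hfpos (t - s)).
  assert (0 <= Lr s ^ 2) by apply pow2_ge_0. assert (0 <= Lbr s ^ 2) by apply pow2_ge_0.
  nra. }
assert (Hboundary : - f1 (t - b) * u b ^ 2 <= Rabs (f1 (t - b)) * u b ^ 2).
{ apply Rmult_le_compat_r; [apply pow2_ge_0|].
  rewrite <- Rabs_Ropp. apply Rle_abs. }
assert (0 <= Rabs (f1 (t - b)) * u b ^ 2)
  by (apply Rmult_le_pos; [apply Rabs_pos | apply pow2_ge_0]).
change (RInt g0 0 b <= (2 * C0 + 2) * (RInt energy 0 b + Rabs (f1 (t - b)) * u b ^ 2)).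
assert (HIBP := integration_by_parts).
set (E := RInt energy 0 b) in *. set (P := Rabs (f1 (t - b)) * u b ^ 2) in *.
assert (0 <= C0 * P) by (apply Rmult_le_pos; lra).
lra.
Qed.

End Radial.

Section Ball.
Variables (phi : fun4) (dphi : nat -> fun4) (U : R -> R -> R -> R -> Prop) (t Rr : R).
Hypothesis HU : open4 U.
Hypothesis Hball : forall x y z, x ^ 2 + y ^ 2 + z ^ 2 <= Rr ^ 2 -> U t x y z.
Hypothesis Hsm : smooth_on U phi.
Hypothesis Hd : forall i s x y z, (i < 4)%nat -> U s x y z ->
  derivable_pt_lim (along phi i s x y z) (coord i s x y z) (dphi i s x y z).
Hypothesis HRr : 0 < Rr.
Hypothesis Ht : 0 <= t.

Let FL w1 w2 w3 := Rint (fun r => f2 (t - r) * phi t (r * w1) (r * w2) (r * w3) ^ 2 * r ^ 2) 0 Rr.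
Let FR w1 w2 w3 := Rint (fun r => (f (t + r) * Lrphi phi dphi t r w1 w2 w3 ^ 2
  + f (t - r) * Lbrphi phi dphi t r w1 w2 w3 ^ 2) / r ^ 2 * r ^ 2) 0 Rr.
Let FB w1 w2 w3 := phi t (Rr * w1) (Rr * w2) (Rr * w3) ^ 2 * Rr ^ 2.

Lemma ball_in_U r w1 w2 w3 : 0 <= r <= Rr -> w1 ^ 2 + w2 ^ 2 + w3 ^ 2 <= 1 ->
  U t (r * w1) (r * w2) (r * w3).
Proof.
intros Hr Hw. apply Hball.
replace ((r * w1) ^ 2 + (r * w2) ^ 2 + (r * w3) ^ 2) with (r ^ 2 * (w1 ^ 2 + w2 ^ 2 + w3 ^ 2))
  by ring.
assert (r ^ 2 <= Rr ^ 2) by (apply pow_incr; lra).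
assert (0 <= r ^ 2) by apply pow2_ge_0.
nra.
Qed.

Lemma continuous_ball_slice {T : UniformSpace} (g : fun4) (r th ph : T -> R) q :
  cont4_on U g -> 0 <= r q <= Rr -> continuous r q -> continuous th q -> continuous ph q ->
  continuous (fun y => g t (r y * (sin (th y) * cos (ph y))) (r y * (sin (th y) * sin (ph y)))
                         (r y * cos (th y))) q.
Proof.
intros Hg Hr Hcr Hcth Hcph. apply (continuous_cont4_on U); [exact Hg | | auto_continuous ..].
apply ball_in_U; [exact Hr | rewrite sphere_point_unit; lra].
Qed.

Lemma cont4_on_phi : cont4_on U phi.
Proof. exact (smooth_on_cont4_on U phi HU Hsm). Qed.

Lemma cont4_on_dphi i : (i < 4)%nat -> cont4_on U (dphi i).
Proof. exact (smooth_on_partial_cont4_on U phi dphi i HU Hsm Hd). Qed.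

Ltac ball_continuous :=
  auto_continuous;
  try (apply continuous_ball_slice;
       [first [apply cont4_on_phi | apply cont4_on_dphi; lia] | simpl; lra | auto_continuous ..]).

Section Direction.
Variables th ph : R.

Let w1 := sin th * cos ph.
Let w2 := sin th * sin ph.
Let w3 := cos th.
Let u r := r * phi t (r * w1) (r * w2) (r * w3).
Let Lr r := Lrphi phi dphi t r w1 w2 w3.
Let Lbr r := Lbrphi phi dphi t r w1 w2 w3.

Let derivable_u s : 0 <= s <= Rr -> derivable_pt_lim u s ((Lr s - Lbr s) / 2).
Proof.
intros Hs.
assert (Hw : forall w, w ^ 2 <= 1 -> Rabs w <= 1)
  by (intros w Hw; apply Rabs_le; nra).
assert (Hunit := sphere_point_unit th ph). fold w1 w2 w3 in Hunit.
assert (H1 := pow2_ge_0 w1). assert (H2 := pow2_ge_0 w2). assert (H3 := pow2_ge_0 w3).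
assert (Hrad := derivable_pt_lim_radial U phi dphi t s w1 w2 w3 HU Hd cont4_on_dphi
  (ball_in_U s w1 w2 w3 Hs ltac:(lra))
  (Hw w1 ltac:(lra)) (Hw w2 ltac:(lra)) (Hw w3 ltac:(lra))).
assert (H := derivable_pt_lim_mult id _ s _ _ (derivable_pt_lim_id s) Hrad).
replace ((Lr s - Lbr s) / 2) with
  (1 * phi t (s * w1) (s * w2) (s * w3) + id s * (w1 * dphi 1%nat t (s * w1) (s * w2) (s * w3)
   + w2 * dphi 2%nat t (s * w1) (s * w2) (s * w3) + w3 * dphi 3%nat t (s * w1) (s * w2) (s * w3)))
  by (unfold Lr, Lbr, Lrphi, Lbrphi, id; simpl; field).
exact H.
Qed.

Let continuous_Lr s : 0 <= s <= Rr -> continuous Lr s /\ continuous Lbr s.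
Proof.
intros Hs. unfold Lr, Lbr, Lrphi, Lbrphi, w1, w2, w3; simpl.
split; ball_continuous.
Qed.

Lemma direction_estimate :
  polar FL (th, ph) <= (2 * C0 + 2) * (polar FR (th, ph) + Rabs (f1 (t - Rr)) * polar FB (th, ph)).
Proof.
destruct continuous_weights as [Hcf [_ Hcf2]].
change (FL w1 w2 w3 <= (2 * C0 + 2) * (FR w1 w2 w3 + Rabs (f1 (t - Rr)) * FB w1 w2 w3)).
unfold FL, FR, FB.
rewrite (Rint_ext_open (fun r => f2 (t - r) * u r ^ 2)); [| lra | intros r _; unfold u; ring |].
2: { apply ex_RInt_continuous_on; [lra|]. intros r Hr. unfold u, w1, w2, w3. ball_continuous. }
rewrite (Rint_ext_open (fun r => f (t + r) * Lr r ^ 2 + f (t - r) * Lbr r ^ 2)); [| lra | |].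
2: { intros r Hr. unfold Lr, Lbr. field. lra. }
2: { apply ex_RInt_continuous_on; [lra|]. intros r Hr.
     destruct (continuous_Lr r Hr). auto_continuous. }
replace (phi t (Rr * w1) (Rr * w2) (Rr * w3) ^ 2 * Rr ^ 2) with (u Rr ^ 2) by (unfold u; ring).
apply weighted_radial_estimate;
  [lra | lra | unfold u; ring | exact derivable_u | intros s Hs; apply continuous_Lr, Hs ..].
Qed.

End Direction.

Lemma ball_estimate :
  ball_int Rr (fun r w1 w2 w3 => f2 (t - r) * (phi t (r * w1) (r * w2) (r * w3)) ^ 2)
  <= (2 * C0 + 2) * (ball_int Rr (fun r w1 w2 w3 =>
         (f (t + r) * (Lrphi phi dphi t r w1 w2 w3) ^ 2
          + f (t - r) * (Lbrphi phi dphi t r w1 w2 w3) ^ 2) / r ^ 2)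
       + Rabs (f1 (t - Rr)) *
         sph_int (fun w1 w2 w3 => (phi t (Rr * w1) (Rr * w2) (Rr * w3)) ^ 2 * Rr ^ 2)).
Proof.
destruct continuous_weights as [Hcf [_ Hcf2]].
change (sph_int FL <= (2 * C0 + 2) * (sph_int FR + Rabs (f1 (t - Rr)) * sph_int FB)).
assert (HFL : sph_continuous FL).
{ apply (sph_continuous_Rint
    (fun r w1 w2 w3 => f2 (t - r) * phi t (r * w1) (r * w2) (r * w3) ^ 2 * r ^ 2)); [lra | auto |].
  intros r z Hr. unfold polar; simpl. ball_continuous. }
assert (HFR : sph_continuous FR).
{ apply (sph_continuous_Rint (fun r w1 w2 w3 =>
    f (t + r) * Lrphi phi dphi t r w1 w2 w3 ^ 2 + f (t - r) * Lbrphi phi dphi t r w1 w2 w3 ^ 2));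
    [lra | intros r w1 w2 w3 Hr; field; lra |].
  intros r z Hr. unfold polar, Lrphi, Lbrphi; simpl. ball_continuous. }
assert (HFB : sph_continuous FB) by (intros z; unfold polar, FB; ball_continuous).
rewrite Rmult_plus_distr_l, <- Rmult_assoc, <- sph_int_lin by assumption.
apply sph_int_le; [exact HFL | intros z; unfold polar; auto_continuous; apply HFR || apply HFB |].
intros [th ph]. eapply Rle_trans; [apply direction_estimate|]. right. unfold polar. simpl. ring.
Qed.

End Ball.

End WeightedEstimate.

Theorem lemma2p9 :
  forall C0 : R, 0 < C0 ->
  exists C : R, 0 < C /\
  forall (f f1 f2 : R -> R) (t Rr : R) (phi : fun4) (dphi : nat -> fun4)
         (U : R -> R -> R -> R -> Prop),
    (forall v, 0 < f v) ->
    (forall v, f (- v) = f v) ->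
    (forall v, derivable_pt_lim f v (f1 v)) ->
    (forall v, derivable_pt_lim f1 v (f2 v)) ->
    continuity f2 ->
    (forall v, 0 <= v -> 0 <= f1 v) ->
    (forall v, (f1 v) ^ 2 <= C0 * f2 v * f v) ->
    0 <= t -> 0 < Rr ->
    open4 U ->
    (forall x y z, x ^ 2 + y ^ 2 + z ^ 2 <= Rr ^ 2 -> U t x y z) ->
    smooth_on U phi ->
    (forall i s x y z, (i < 4)%nat -> U s x y z ->
       derivable_pt_lim (along phi i s x y z) (coord i s x y z) (dphi i s x y z)) ->
    ball_int Rr (fun r w1 w2 w3 => f2 (t - r) * (phi t (r * w1) (r * w2) (r * w3)) ^ 2)
    <= C * ( ball_int Rr (fun r w1 w2 w3 =>
                (f (t + r) * (Lrphi phi dphi t r w1 w2 w3) ^ 2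
                 + f (t - r) * (Lbrphi phi dphi t r w1 w2 w3) ^ 2) / r ^ 2)
             + Rabs (f1 (t - Rr)) *
               sph_int (fun w1 w2 w3 =>
                 (phi t (Rr * w1) (Rr * w2) (Rr * w3)) ^ 2 * Rr ^ 2)).
Proof.
intros C0 HC0. exists (2 * C0 + 2). split; [lra|].
intros f f1 f2 t Rr phi dphi U Hfpos Heven Hf1 Hf2 Hc2 Hmono HC Ht HRr HU Hball Hsm Hd.
exact (ball_estimate f f1 f2 C0 Hfpos Heven Hf1 Hf2 Hc2 Hmono HC HC0
         phi dphi U t Rr HU Hball Hsm Hd HRr Ht).
Qed.
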